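(* Let $E$ be a regular biordered set satisfying: (E1) there exists $0\in E$ with $0\,\omega\,e$ for every $e\in E$; (E2) there is a map $e\mapsto e'$ on $E$ such that for all $e,f\in E$: (i) $(e')'=e$; (ii) $f\,\omega^l\,e$ iff $e'\,\omega^r\,f'$; (iii) $f\,\omega^l\,e'$ iff $M(f,e)=\{0\}$. Let $e,f\in E$ with $1\le d_l(e,f)\le 3$. Then $\mathcal L(e)$ and $\mathcal L(f)$ are in perspective in the lattice $L(E)=E/\mathcal L$.
   Context: A regular biordered set is a partial algebra isomorphic to the set of idempotents $E(S)$ of a regular semigroup $S$ (regular: every $x$ has $y$ with $xyx=x$), where $ef$ (computed in $S$) is defined when $\{ef,fe\}\cap\{e,f\}\ne\emptyset$. In $E$: $\omega^l=\{(e,f): ef=e\}$, $\omega^r=\{(e,f): fe=e\}$, $\omega=\omega^l\cap\omega^r$; $M(e,f)=\{g\in E: g\,\omega^l\,e,\ g\,\omega^r\,f\}$. $\mathcal L=\omega^l\cap(\omega^l)^{-1}$, $\mathcal R=\omega^r\cap(\omega^r)^{-1}$; $E/\mathcal L$ is ordered by $\mathcal L(e)\le\mathcal L(f)$ iff $e\,\omega^l\,f$ (a lattice under (E1),(E2)). Two lattice elements are in perspective if they have a common complement. An $E$-sequence of length $m\ge1$ from $e$ to $f$ is $e=x_0,\dots,x_m=f$ with $x_{i-1}\,(\mathcal L\cup\mathcal R)\,x_i$ for each $i$; $d_l(e,f)$ is the least length of such a sequence with $x_0\,\mathcal L\,x_1$, and $d_l(e,f)=0$ if none exists. *)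

(* A regular biordered set is (up to isomorphism) the set E(S)
   of idempotents of a regular semigroup S; we work directly with E(S). *)
From Stdlib Require Import Arith Lia.

Section Biordered.
Variable T : Type.
Variable mul : T -> T -> T.

Definition associative_op : Prop :=
  forall x y z, mul x (mul y z) = mul (mul x y) z.
Definition regular_sg : Prop := forall x, exists y, mul (mul x y) x = x.

Definition idem (e : T) : Prop := mul e e = e.

Definition omega_l (e f : T) : Prop := mul e f = e.
Definition omega_r (e f : T) : Prop := mul f e = e.
Definition omega (e f : T) : Prop := omega_l e f /\ omega_r e f.
Definition inM (e f g : T) : Prop := idem g /\ omega_l g e /\ omega_r g f.
Definition rel_L (e f : T) : Prop := omega_l e f /\ omega_l f e.
Definition rel_R (e f : T) : Prop := omega_r e f /\ omega_r f e.

Definition Eseq_L (e f : T) (m : nat) : Prop :=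
  1 <= m /\ exists x : nat -> T,
    x 0 = e /\ x m = f /\ (forall i, i <= m -> idem (x i)) /\
    (forall i, i < m -> rel_L (x i) (x (S i)) \/ rel_R (x i) (x (S i))) /\
    rel_L (x 0) (x 1).

Definition is_dl (e f : T) (n : nat) : Prop :=
  (Eseq_L e f n /\ forall m, Eseq_L e f m -> n <= m)
  \/ (n = 0 /\ forall m, ~ Eseq_L e f m).

(* Lattice L(E) = E/L, ordered by omega_l, handled via representatives. *)
Definition is_glb (a b m : T) : Prop :=
  idem m /\ omega_l m a /\ omega_l m b /\
  forall z, idem z -> omega_l z a -> omega_l z b -> omega_l z m.
Definition is_lub (a b j : T) : Prop :=
  idem j /\ omega_l a j /\ omega_l b j /\
  forall z, idem z -> omega_l a z -> omega_l b z -> omega_l j z.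
Definition is_top (t : T) : Prop := idem t /\ forall g, idem g -> omega_l g t.

(* L(c) is a complement of L(a) in L(E), whose bottom is L(z) *)
Definition L_complement (z a c : T) : Prop :=
  (exists m, is_glb a c m /\ rel_L m z) /\
  (exists j, is_lub a c j /\ is_top j).

Definition L_perspective (z a b : T) : Prop :=
  exists c, idem c /\ L_complement z a c /\ L_complement z b c.
End Biordered.
Arguments associative_op {T}. Arguments regular_sg {T}. Arguments idem {T}. Arguments omega_l {T}. Arguments omega_r {T}. Arguments omega {T}. Arguments inM {T}. Arguments is_dl {T}. Arguments L_perspective {T}.

From Stdlib Require Import Arith Lia.

(* The involution [c] reverses [omega_l] into [omega_r] (E2ii), so it sends
   R-related idempotents to L-related ones.  By E2iii the sandwich set
   M(a, c a) is {0}, and in a regular semigroup this forces a (c a) = 0.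
   Hence L(c a) is a complement of L(a): their meet is L(0) and their join is
   the top L(c 0).  Complements only depend on L-classes, so whenever
   e L b1 R b2 L f, the element c b1 is a common complement of L(e) and L(f);
   and every E-sequence of length at most 3 that starts with an L-step
   connects e to f through such an L-R-L chain. *)

Section RegularSemigroup.
Variable T : Type.
Variable mul : T -> T -> T.
Hypothesis Hassoc : associative_op mul.
Hypothesis Hreg : regular_sg mul.

Local Notation L := (rel_L T mul).
Local Notation R := (rel_R T mul).

Lemma mulA_eq u v w s : mul u v = w -> mul (mul s u) v = mul s w.
Proof. intros H. rewrite <- Hassoc, H. reflexivity. Qed.

Lemma omega_l_trans a b d : omega_l mul a b -> omega_l mul b d -> omega_l mul a d.
Proof. unfold omega_l. intros Hab Hbd. rewrite <- Hab, <- Hassoc, Hbd. reflexivity. Qed.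

Lemma omega_r_trans a b d : omega_r mul a b -> omega_r mul b d -> omega_r mul a d.
Proof. unfold omega_r. intros Hab Hbd. rewrite <- Hab, Hassoc, Hbd. reflexivity. Qed.

Lemma rel_L_refl a : idem mul a -> L a a.
Proof. intros Ha. split; exact Ha. Qed.

Lemma rel_R_refl a : idem mul a -> R a a.
Proof. intros Ha. split; exact Ha. Qed.

Lemma rel_L_sym a b : L a b -> L b a.
Proof. intros [Hab Hba]. split; assumption. Qed.

Lemma rel_L_trans a b d : L a b -> L b d -> L a d.
Proof.
  intros [Hab Hba] [Hbd Hdb].
  split; [apply (omega_l_trans _ b) | apply (omega_l_trans _ b)]; assumption.
Qed.

Lemma rel_R_trans a b d : R a b -> R b d -> R a d.
Proof.
  intros [Hab Hba] [Hbd Hdb].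
  split; [apply (omega_r_trans _ b) | apply (omega_r_trans _ b)]; assumption.
Qed.

(* The sandwich element is g = b y' a for the inverse y' = y (a b) y of a b. *)
Lemma sandwich_factorization a b :
  idem mul a -> idem mul b ->
  exists g, inM mul a b g /\ mul (mul a g) b = mul a b.
Proof.
  intros Ha Hb. destruct (Hreg (mul a b)) as [y Hy].
  assert (Hcancel : forall s,
    mul (mul (mul (mul (mul s a) b) y) a) b = mul (mul s a) b).
  { intros s. pose proof (mulA_eq _ _ _ s Hy) as H. rewrite !Hassoc in H. exact H. }
  rewrite !Hassoc in Hy.
  exists (mul (mul (mul (mul (mul b y) a) b) y) a).
  split; [split; [|split]|].
  - unfold idem. rewrite !Hassoc, !Hcancel. reflexivity.
  - apply mulA_eq, Ha.
  - unfold omega_r. rewrite !Hassoc. unfold idem in Hb. rewrite Hb. reflexivity.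
  - rewrite !Hassoc, !Hcancel. exact Hy.
Qed.

Lemma is_glb_sym a k m : is_glb T mul a k m -> is_glb T mul k a m.
Proof. intros (Hm & Hma & Hmk & Hmax). repeat split; auto. Qed.

Lemma is_lub_sym a k j : is_lub T mul a k j -> is_lub T mul k a j.
Proof. intros (Hj & Haj & Hkj & Hmin). repeat split; auto. Qed.

Lemma is_glb_rel_L a a' k m : L a a' -> is_glb T mul a k m -> is_glb T mul a' k m.
Proof.
  intros [Haa' Ha'a] (Hm & Hma & Hmk & Hmax). repeat split; auto.
  - apply (omega_l_trans _ a); assumption.
  - intros w Hw Hwa' Hwk. apply Hmax; auto. apply (omega_l_trans _ a'); assumption.
Qed.

Lemma is_lub_rel_L a a' k j : L a a' -> is_lub T mul a k j -> is_lub T mul a' k j.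
Proof.
  intros [Haa' Ha'a] (Hj & Haj & Hkj & Hmin). repeat split; auto.
  - apply (omega_l_trans _ a); assumption.
  - intros w Hw Ha'w Hkw. apply Hmin; auto. apply (omega_l_trans _ a'); assumption.
Qed.

Lemma L_complement_sym z a k : L_complement T mul z a k -> L_complement T mul z k a.
Proof.
  intros [[m [Hm Hmz]] [j [Hj Htop]]]. split.
  - exists m. split; [apply is_glb_sym|]; assumption.
  - exists j. split; [apply is_lub_sym|]; assumption.
Qed.

Lemma L_complement_rel_L z a a' k :
  L a a' -> L_complement T mul z a k -> L_complement T mul z a' k.
Proof.
  intros Haa' [[m [Hm Hmz]] [j [Hj Htop]]]. split.
  - exists m. split; [eapply is_glb_rel_L|]; eassumption.
  - exists j. split; [eapply is_lub_rel_L|]; eassumption.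
Qed.

Definition LR_chain (a k : T) : Prop :=
  exists b, idem mul b /\ L a b /\ R b k.

Definition LRL_chain (a f : T) : Prop :=
  exists k, idem mul k /\ LR_chain a k /\ L k f.

Lemma LR_chain_of_rel_L a b : idem mul b -> L a b -> LR_chain a b.
Proof. intros Hb Hab. exists b. auto using rel_R_refl. Qed.

Lemma LRL_chain_of_LR a k : idem mul k -> LR_chain a k -> LRL_chain a k.
Proof. intros Hk Hak. exists k. auto using rel_L_refl. Qed.

Lemma LR_chain_step a b k : idem mul b -> idem mul k ->
  L a b -> L b k \/ R b k -> LR_chain a k.
Proof.
  intros Hb Hk Hab [Hbk | Hbk].
  - apply LR_chain_of_rel_L; [exact Hk | apply (rel_L_trans _ b); assumption].
  - exists b. auto.
Qed.

Lemma LRL_chain_step a k f : idem mul k -> idem mul f ->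
  LR_chain a k -> L k f \/ R k f -> LRL_chain a f.
Proof.
  intros Hk Hf Hak [Hkf | Hkf].
  - exists k. auto.
  - apply LRL_chain_of_LR; [assumption|].
    destruct Hak as (b & Hb & Hab & Hbk).
    exists b. split; [exact Hb | split; [exact Hab | apply (rel_R_trans _ k); assumption]].
Qed.

Lemma Eseq_L_le3_LRL_chain e f n :
  Eseq_L T mul e f n -> n <= 3 -> LRL_chain e f.
Proof.
  intros [Hn (x & <- & <- & Hidem & Hstep & HL01)] Hn3.
  assert (Hx1 : LR_chain (x 0) (x 1)) by (apply LR_chain_of_rel_L; auto with arith).
  destruct (Nat.eq_dec n 1) as [-> | H1]; [apply LRL_chain_of_LR; auto|].
  assert (Hx2 : LR_chain (x 0) (x 2)).
  { apply (LR_chain_step _ (x 1)); [apply Hidem; lia | apply Hidem; lia | exact HL01 |].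
    apply Hstep; lia. }
  destruct (Nat.eq_dec n 2) as [-> | H2]; [apply LRL_chain_of_LR; auto|].
  assert (n = 3) as -> by lia.
  apply (LRL_chain_step _ (x 2)); [apply Hidem; lia | apply Hidem; lia | exact Hx2 |].
  apply Hstep; lia.
Qed.

Lemma is_dl_pos_Eseq_L e f n : is_dl mul e f n -> 1 <= n -> Eseq_L T mul e f n.
Proof. intros [[Hseq _] | [-> _]] Hn; [exact Hseq | lia]. Qed.

Section Complemented.
Variable z : T.
Hypothesis Hz : idem mul z.
Hypothesis E1 : forall e, idem mul e -> omega mul z e.
Variable c : T -> T.
Hypothesis Hc : forall e, idem mul e -> idem mul (c e).
Hypothesis E2i : forall e, idem mul e -> c (c e) = e.
Hypothesis E2ii : forall e f, idem mul e -> idem mul f ->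
  (omega_l mul f e <-> omega_r mul (c e) (c f)).
Hypothesis E2iii : forall e f, idem mul e -> idem mul f ->
  (omega_l mul f (c e) <-> (forall g, inM mul f e g <-> g = z)).

Lemma mul_eq_zero_of_sandwich_zero a b : idem mul a -> idem mul b ->
  (forall g, inM mul a b g <-> g = z) -> mul a b = z.
Proof.
  intros Ha Hb HM.
  destruct (sandwich_factorization a b Ha Hb) as [g [Hg Hab]].
  apply HM in Hg. subst g.
  rewrite <- Hab. destruct (E1 a Ha) as [_ ->]. apply E1, Hb.
Qed.

Lemma mul_compl_r a : idem mul a -> mul a (c a) = z.
Proof.
  intros Ha. apply mul_eq_zero_of_sandwich_zero; auto.
  apply (E2iii (c a) a); auto. rewrite E2i; assumption.
Qed.

Lemma compl_zero_top : is_top T mul (c z).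
Proof.
  split; [auto|]. intros g Hg.
  apply E2ii; auto. rewrite E2i by assumption. apply E1; auto.
Qed.

Lemma compl_is_glb a : idem mul a -> is_glb T mul a (c a) z.
Proof.
  intros Ha. repeat split; try apply E1; auto.
  unfold omega_l. intros w Hw Hwa Hwca.
  rewrite <- (mul_compl_r a Ha), Hassoc, Hwa, Hwca. reflexivity.
Qed.

Lemma compl_is_lub a : idem mul a -> is_lub T mul a (c a) (c z).
Proof.
  intros Ha. repeat split; try apply compl_zero_top; auto.
  intros y Hy Hay Hcay.
  apply E2ii in Hay; auto. apply E2ii in Hcay; auto. rewrite E2i in Hcay by assumption.
  apply E2ii; auto. rewrite E2i by assumption. unfold omega_r in *.
  rewrite <- (mul_compl_r a Ha), <- Hassoc, Hay, Hcay. reflexivity.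
Qed.

Lemma L_complement_compl a : idem mul a -> L_complement T mul z a (c a).
Proof.
  intros Ha. split.
  - exists z. split; [apply compl_is_glb | apply rel_L_refl]; assumption.
  - exists (c z). split; [apply compl_is_lub | apply compl_zero_top]; assumption.
Qed.

Lemma rel_L_compl_of_rel_R a b : idem mul a -> idem mul b -> R a b -> L (c a) (c b).
Proof.
  intros Ha Hb [Hab Hba].
  split; apply E2ii; auto; rewrite !E2i; assumption.
Qed.

Lemma L_perspective_of_LRL_chain e f :
  idem mul e -> idem mul f -> LRL_chain e f -> L_perspective mul z e f.
Proof.
  intros He Hf (k & Hk & (b & Hb & Heb & Hbk) & Hkf).
  exists (c b). split; [auto | split].
  - apply (L_complement_rel_L _ b); [apply rel_L_sym, Heb|].
    apply L_complement_compl, Hb.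
  - apply (L_complement_rel_L _ k); [exact Hkf|].
    apply L_complement_sym, (L_complement_rel_L _ (c k)).
    + apply rel_L_sym, rel_L_compl_of_rel_R; assumption.
    + apply L_complement_sym, L_complement_compl, Hk.
Qed.

End Complemented.
End RegularSemigroup.

Theorem proposition5p6 (T : Type) (mul : T -> T -> T)
  (Hassoc : associative_op mul) (Hreg : regular_sg mul)
  (z : T) (Hz : idem mul z)
  (E1 : forall e, idem mul e -> omega mul z e)
  (c : T -> T) (Hc : forall e, idem mul e -> idem mul (c e))
  (E2i : forall e, idem mul e -> c (c e) = e)
  (E2ii : forall e f, idem mul e -> idem mul f ->
            (omega_l mul f e <-> omega_r mul (c e) (c f)))
  (E2iii : forall e f, idem mul e -> idem mul f ->
            (omega_l mul f (c e) <-> (forall g, inM mul f e g <-> g = z)))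
  (e f : T) (He : idem mul e) (Hf : idem mul f)
  (Hd : exists n, is_dl mul e f n /\ 1 <= n <= 3) :
  L_perspective mul z e f.
Proof.
  destruct Hd as (n & Hdl & Hn1 & Hn3).
  apply (L_perspective_of_LRL_chain T mul Hassoc Hreg z Hz E1 c Hc E2i E2ii E2iii e f He Hf).
  apply (Eseq_L_le3_LRL_chain T mul Hassoc e f n); [apply is_dl_pos_Eseq_L |]; assumption.
Qed.
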